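(* Let $p$ be a prime and let $\mathcal{C}\subseteq\mathbb{F}_p^{N'}$ be a linear $b$-quasi-cyclic code of dimension $K$ with a systematic generator matrix, where $L\triangleq N'/b$ is an integer, $r_d\triangleq K/N'$ satisfies $r_d b\in\mathbb{Z}$, and $D_{max}<L$ is a nonnegative integer. Transmit a codeword $\mathbf{c}\in\mathcal{C}$ with the interleave/deinterleave transform (IDT) described in the context, over the channel $y[n]=x[n-\tau]+z[n]$ with integer delay $\tau\in\{0,\ldots,D_{max}\}$ (with $x[n]=0$ for $n\le 0$) and i.i.d. noise $z[n]\sim\mathcal{N}(0,1)$. Suppose the receiver does not compensate the delay, i.e. it applies CP removal and deinterleaving directly to the received sequence $\mathbf{y}$, which is a noisy version of $[0,\ldots,0,\mathbf{x}[1],\ldots,\mathbf{x}[b]]$ with $\tau$ leading zeros. Then the deinterleaver output equals $\tilde{\mathbf{x}}^{(b\tau)}+\tilde{\mathbf{z}}$, where $\tilde{\mathbf{x}}=\mathcal{M}(\mathbf{c})$ and $\tilde{\mathbf{z}}$ has i.i.d. $\mathcal{N}(0,1)$ entries; that is, the IDT transforms the received signal into a noisy version of the codeword circularly shifted by $b\tau$. Moreover, $\tilde{\mathbf{x}}^{(b\tau)}=\mathcal{M}(\mathbf{c}^{(b\tau)})$ with $\mathbf{c}^{(b\tau)}\in\mathcal{C}$, so one can directly decode $\mathbf{c}^{(b\tau)}$.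
   Context: For a vector $\mathbf{x}$ of length $n$, $\mathbf{x}^{(t)}$ denotes its right circular shift by $t$ positions (e.g. $[1,2,3,4]^{(1)}=[4,1,2,3]$). A linear code $\mathcal{C}$ of length $N'$ is $b$-quasi-cyclic ($b$-QC) if for every $\mathbf{c}\in\mathcal{C}$, $\mathbf{c}^{(bi)}\in\mathcal{C}$ for all integers $i$. The mapping $\mathcal{M}:\mathbb{F}_p\to\mathbb{R}$ (applied componentwise) is $\mathcal{M}(u)=u$ for $0\le u\le (p-1)/2$, $\mathcal{M}(u)=u-p$ for $(p-1)/2<u<p$ when $p\ge3$, and $\mathcal{M}(u)=u-1/2$ when $p=2$. IDT at the transmitter: (1) form $\tilde{\mathbf{x}}=\mathcal{M}(\mathbf{c})\in\mathbb{R}^{N'}$; (2) interleave: $\bar{\mathbf{x}}=[\bar{\mathbf{x}}[1],\ldots,\bar{\mathbf{x}}[b]]$ consists of $b$ sub-blocks of length $L$, where sub-block $s$ is $\bar{\mathbf{x}}[s]=(\tilde{x}[s],\tilde{x}[s+b],\ldots,\tilde{x}[s+(L-1)b])$ (write column-wise, transmit row-wise interleaver); (3) for each of the first $r_d b$ sub-blocks (which carry message symbols of the systematic encoder), the last $D_{max}$ symbols are frozen to zero and the sub-block is sent as is, $\mathbf{x}[s]=\bar{\mathbf{x}}[s]$; for each of the last $(1-r_d)b$ sub-blocks a cyclic prefix is prepended, $\mathbf{x}[s]=[\bar{x}^{L-D_{max}+1}[s],\ldots,\bar{x}^{L}[s],\bar{x}^1[s],\ldots,\bar{x}^L[s]]$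 (where $\bar x^{l}[s]$ is the $l$-th entry of $\bar{\mathbf{x}}[s]$); the transmitted signal is $\mathbf{x}=[\mathbf{x}[1],\ldots,\mathbf{x}[b]]$, of length $N'+(1-r_d)bD_{max}$. At the receiver: CP removal discards the received samples at the positions where the cyclic prefixes are located in the undelayed frame and keeps the $b$ length-$L$ windows at the positions of the sub-blocks $\bar{\mathbf{x}}[s]$, giving $\bar{\mathbf{y}}=[\bar{\mathbf{y}}[1],\ldots,\bar{\mathbf{y}}[b]]$; the deinterleaver is the inverse of step (2), i.e. $\tilde{y}[s+(l-1)b]$ is the $l$-th entry of $\bar{\mathbf{y}}[s]$.
   Formalization: The entries of $\mathbf{c}$ in the last $D_{max}$ positions of each of the first $r_d b$ sub-blocks satisfy $\mathcal{M}(u)=0$ rather than u = 0, which no codeword meets when p = 2, $r_d>0$ and $D_{max}\ge 1$. Each condition added here is assumed in the paper as well or is needed for the statement above to hold. *)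

From HB Require Import structures.
From mathcomp Require Import all_boot all_order all_algebra.
From mathcomp Require Import reals.
Set Implicit Arguments. Unset Strict Implicit. Unset Printing Implicit Defensive.
Import Order.TTheory GRing.Theory Num.Theory.
Local Open Scope ring_scope.

(* All indices are 0-based.  Vectors of length N' = b*L are row vectors. *)

Lemma idt_ord_pos n (i : 'I_n) : (0 < n)%N.
Proof. exact: (leq_ltn_trans (leq0n i) (ltn_ord i)). Qed.

(* right circular shift by t: (cshift t v)_i = v_{(i - t) mod n} *)
Definition cshift (T : Type) (n t : nat) (v : 'rV[T]_n) : 'rV[T]_n :=
  \row_(i < n) v 0 (Ordinal (ltn_pmod (i + (n - t %% n))%N (idt_ord_pos i))).

Definition vget (T : Type) (n : nat) (v : 'rV[T]_n) (d : T) (i : nat) : T :=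
  match (insub i : option 'I_n) with Some j => v 0 j | None => d end.

Definition Mmap (p : nat) (R : realType) (u : 'F_p) : R :=
  if p == 2%N then (val u)%:R - 2^-1
  else if (val u <= (p - 1) %/ 2)%N then (val u)%:R
  else (val u)%:R - p%:R.

Definition Mvec (p : nat) (R : realType) (n : nat) (c : 'rV['F_p]_n) : 'rV[R]_n :=
  map_mx (@Mmap p R) c.

Definition xbar (R : realType) (b L : nat) (xt : 'rV[R]_(b * L)) (s l : nat) : R :=
  vget xt 0 (s + l * b)%N.

(* transmitted signal (time 0-based, 0 outside the frame);
   m = r_d b sub-blocks sent as is, the remaining b - m with a CP of length D *)
Definition xsig (R : realType) (b L m D : nat) (xt : 'rV[R]_(b * L)) (t : nat) : R :=
  if (t < m * L)%N then xbar xt (t %/ L) (t %% L)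
  else if (t < m * L + (b - m) * (L + D))%N then
    let u := (t - m * L)%N in
    let s := (m + u %/ (L + D))%N in
    let q := (u %% (L + D))%N in
    if (q < D)%N then xbar xt s (L - D + q) else xbar xt s (q - D)
  else 0.

Definition received (R : realType) (tau : nat) (x : nat -> R) (z : nat -> R) (t : nat) : R :=
  (if (tau <= t)%N then x (t - tau)%N else 0) + z t.

(* start (in the undelayed frame) of the length-L window holding sub-block s *)
Definition wstart (L m D s : nat) : nat :=
  if (s < m)%N then (s * L)%N else (m * L + (s - m) * (L + D) + D)%N.

(* CP removal followed by deinterleaving: ytilde[s + l*b] = ybar[s]^l *)
Definition deint (R : realType) (b L : nat) (m D : nat) (y : nat -> R) : 'rV[R]_(b * L) :=
  \row_(i < b * L) y (wstart L m D (i %% b) + i %/ b)%N.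

Definition frozen (R : realType) (b L m D : nat) (xt : 'rV[R]_(b * L)) : Prop :=
  forall s l : nat, (s < m)%N -> (L - D <= l)%N -> (l < L)%N -> xbar xt s l = 0.

Definition quasi_cyclic (p K b L : nat) (G : 'M['F_p]_(K, b * L)) : Prop :=
  forall c : 'rV['F_p]_(b * L), (c <= G)%MS ->
    forall i : nat, (cshift (b * i) c <= G)%MS.

(* G is a systematic generator matrix whose K information positions are the
   coordinates of the first m sub-blocks (coordinate j lies in sub-block j mod b) *)
Definition systematic_gen (p K b L m : nat) (G : 'M['F_p]_(K, b * L)) : Prop :=
  exists f : 'I_K -> 'I_(b * L),
    injective f /\ (forall k, (f k %% b < m)%N) /\
    (forall k, col (f k) G = delta_mx k 0).
Arguments deint {R} b L m D y.

From HB Require Import structures.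
From mathcomp Require Import all_boot all_order all_algebra.
From mathcomp Require Import reals.
From mathcomp Require Import zify.
Import Order.TTheory GRing.Theory Num.Theory.
Local Open Scope ring_scope.

(* Under a delay tau <= D, the receive window of every sub-block sees that
   sub-block rotated cyclically by tau.  For the cyclic-prefix sub-blocks the
   prefix supplies the wrapped-around symbols; for the first m sub-blocks the
   wrapped positions would read the tail of the previous sub-block (or the
   leading zeros of the channel), and both that tail and the symbols that
   should appear there are frozen to zero.  Deinterleaving turns a rotation by
   tau of every sub-block into a circular shift of the codeword by b * tau,
   which is again a codeword by quasi-cyclicity and commutes with the
   componentwise map M.  Each deinterleaved entry reads a distinct received
   sample, so the noise is the sequence z re-indexed injectively. *)

Definition cyclic_sub (L l tau : nat) : nat :=
  if (tau <= l)%N then (l - tau)%N else (L + l - tau)%N.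

Lemma ltn_div_mul {b L i : nat} : (0 < b)%N -> (i < b * L)%N -> (i %/ b < L)%N.
Proof. by move=> b0 iL; rewrite ltn_divLR // mulnC. Qed.

Lemma cshift_index (b L tau i : nat) : (0 < b)%N -> (tau < L)%N -> (i < b * L)%N ->
  ((i + (b * L - (b * tau) %% (b * L))) %% (b * L)
   = i %% b + cyclic_sub L (i %/ b) tau * b)%N.
Proof.
move=> b0 tL iL.
have lL := ltn_div_mul b0 iL.
have btL : (b * tau < b * L)%N by rewrite ltn_pmul2l.
rewrite (modn_small btL) {1}(divn_eq i b).
have := ltn_pmod i b0; move: (i %/ b)%N (i %% b)%N lL => q r qL rb.
rewrite /cyclic_sub; case: ifP => tq.
- have -> : (q * b + r + (b * L - b * tau) = r + (q - tau) * b + b * L)%N.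
    by rewrite mulnBl; nia.
  by rewrite modnDr modn_small //; nia.
- by rewrite modn_small; nia.
Qed.

Lemma vget_ord {T : Type} {n : nat} (v : 'rV[T]_n) (d : T) (j : 'I_n) :
  vget v d j = v 0 j.
Proof. by rewrite /vget valK. Qed.

Lemma cshift_mul_entry {T : Type} {b L tau : nat} (v : 'rV[T]_(b * L)) (d : T)
    (i : 'I_(b * L)) : (0 < b)%N -> (tau < L)%N ->
  cshift (b * tau) v 0 i = vget v d (i %% b + cyclic_sub L (i %/ b) tau * b)%N.
Proof.
by move=> b0 tL; rewrite /cshift mxE -(vget_ord v d) /= cshift_index.
Qed.

Lemma map_mx_cshift (T U : Type) (f : T -> U) (n t : nat) (v : 'rV[T]_n) :
  map_mx f (cshift t v) = cshift t (map_mx f v).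
Proof. by apply/rowP => i; rewrite !mxE. Qed.

Section Transmission.

Variables (R : realType) (b L m D : nat) (xt : 'rV[R]_(b * L)).
Hypotheses (mb : (m <= b)%N) (DL : (D < L)%N).

Lemma xsig_plain_block (s l : nat) : (s < m)%N -> (l < L)%N ->
  xsig m D xt (s * L + l) = xbar xt s l.
Proof.
move=> sm lL; rewrite /xsig ifT; last by nia.
by rewrite divnMDl ?divn_small ?addn0 ?modnMDl ?modn_small //; lia.
Qed.

Lemma xsig_cp_block (s q : nat) : (m <= s < b)%N -> (q < L + D)%N ->
  xsig m D xt (m * L + (s - m) * (L + D) + q)
  = xbar xt s (if (q < D)%N then L - D + q else q - D)%N.
Proof.
case/andP=> ms sb qLD; rewrite /xsig ifF; last by nia.
rewrite ifT; last first.
  have : ((s - m).+1 <= b - m)%N by lia.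
  by move/(leq_mul (leqnn (L + D))); nia.
rewrite -addnA addKn divnMDl ?divn_small ?addn0 ?modnMDl ?modn_small //; try lia.
by rewrite subnKC //; case: ifP.
Qed.

(* [received tau x z t] is [delayed tau x t + z t] by conversion. *)
Definition delayed (tau : nat) (x : nat -> R) (t : nat) : R :=
  if (tau <= t)%N then x (t - tau)%N else 0.

Lemma xsig_delayed_window (tau s l : nat) : (tau <= D)%N -> frozen m D xt ->
  (s < b)%N -> (l < L)%N ->
  delayed tau (xsig m D xt) (wstart L m D s + l) = xbar xt s (cyclic_sub L l tau).
Proof.
move=> tD fr sb lL; rewrite /delayed /wstart /cyclic_sub.
have [sm|ms] := ltnP s m.
- have [tl|lt] := leqP tau l.
    by rewrite ifT -?addnBA ?xsig_plain_block //; lia.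
  rewrite fr //; try lia.
  case: leqP => // tsl; have s0 : (0 < s)%N by nia.
  have -> : (s * L + l - tau = s.-1 * L + (L + l - tau))%N.
    by rewrite -{1}(prednK s0) mulSn; lia.
  by rewrite xsig_plain_block ?fr //; lia.
- rewrite ifT; last by lia.
  have -> : (m * L + (s - m) * (L + D) + D + l - tau
             = m * L + (s - m) * (L + D) + (D + l - tau))%N by nia.
  rewrite xsig_cp_block ?ms //; last by lia.
  by case: leqP => tl; case: ifP => qD; congr xbar; lia.
Qed.

End Transmission.

Lemma wstart_gap (L m D s1 s2 : nat) : (s1 < s2)%N ->
  (wstart L m D s1 + L <= wstart L m D s2)%N.
Proof.
move=> lt12; rewrite /wstart.
case: (ltnP s1 m) => h1; case: (ltnP s2 m) => h2; try lia.
- by have := leq_mul lt12 (leqnn L); nia.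
- by have := leq_mul h1 (leqnn L); nia.
- have : ((s1 - m).+1 <= s2 - m)%N by lia.
  by move/(leq_mul (leqnn (L + D))); nia.
Qed.

Lemma wstart_add_inj (L m D : nat) {s1 s2 l1 l2 : nat} :
  (l1 < L)%N -> (l2 < L)%N ->
  (wstart L m D s1 + l1 = wstart L m D s2 + l2)%N -> s1 = s2.
Proof.
move=> l1L l2L e.
by case: (ltngtP s1 s2) => [/(wstart_gap L m D)|/(wstart_gap L m D)|//]; lia.
Qed.

Lemma window_index_inj (b L m D : nat) : (0 < b)%N ->
  injective (fun i : 'I_(b * L) => (wstart L m D (i %% b) + i %/ b)%N).
Proof.
move=> b0 i j /= e.
have rij : (i %% b = j %% b)%N.
  by apply: (wstart_add_inj L m D _ _ e); apply: ltn_div_mul.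
apply: val_inj; rewrite /= (divn_eq i b) (divn_eq j b) rij.
by rewrite rij in e; rewrite (addnI e).
Qed.

Theorem lemma6 (R : realType) (p b L K m D tau : nat) (G : 'M['F_p]_(K, b * L)) :
  prime p -> (0 < b)%N -> (0 < L)%N ->
  K = (m * L)%N -> (m <= b)%N -> (D < L)%N ->
  \rank G = K -> systematic_gen m G -> quasi_cyclic G ->
  (tau <= D)%N ->
  exists pi : 'I_(b * L) -> nat, injective pi /\
  forall c : 'rV['F_p]_(b * L), (c <= G)%MS ->
    frozen m D (Mvec R c) ->
    forall z : nat -> R,
      deint b L m D (received tau (xsig m D (Mvec R c)) z)
        = cshift (b * tau) (Mvec R c) + \row_(i < b * L) z (pi i)
      /\ Mvec R (cshift (b * tau) c) = cshift (b * tau) (Mvec R c)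
      /\ (cshift (b * tau) c <= G)%MS.
Proof.
move=> _ b0 _ _ mb DL _ _ qc tD.
exists (fun i : 'I_(b * L) => wstart L m D (i %% b) + i %/ b)%N.
split; first exact: window_index_inj.
move=> c cG fr z; split; last split.
- apply/rowP => i; rewrite [LHS]mxE [RHS]mxE [X in _ = _ + X]mxE.
  rewrite (cshift_mul_entry _ 0) //; last by lia.
  congr (_ + _); apply: xsig_delayed_window => //.
    exact: ltn_pmod.
  exact: ltn_div_mul.
- exact: map_mx_cshift.
- exact: qc.
Qed.
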